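(* Let $\alpha\in\mathbb{Q}(i)\setminus\mathbb{R}$ with $|\alpha|>1$, let $P_\alpha(X)=a_2X^2+a_1X+a_0$ with $a_0,a_1,a_2\in\mathbb{Z}$ coprime, $a_2>0$ and $P_\alpha(\alpha)=0$, let $\mathcal{D}=\{0,1,\ldots,|a_0|-1\}$, and let $\Lambda_\alpha=\mathbb{Z}[\alpha]\cap\alpha^{-1}\mathbb{Z}[\alpha^{-1}]$. Then for every $x\in\Lambda_\alpha$ there is a unique $d\in\mathcal{D}$ such that $\frac{x-d}{\alpha}\in\Lambda_\alpha$; consequently the backward division map $T_\alpha:\Lambda_\alpha\to\Lambda_\alpha$, $x\mapsto \frac{x-d}{\alpha}$ with this $d$, is well defined.
   Context: It is known that $\Lambda_\alpha=a_2\mathbb{Z}+(a_2\alpha+a_1)\mathbb{Z}$ is a lattice in $\mathbb{C}$. *)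

(* complex numbers are modelled by algC (algebraic complex numbers),
   which contains Q(i). *)
From HB Require Import structures.
From mathcomp Require Import all_boot all_order all_algebra all_field.
Set Implicit Arguments. Unset Strict Implicit. Unset Printing Implicit Defensive.
Import Order.TTheory GRing.Theory Num.Theory.
Local Open Scope ring_scope.

Definition inZpoly (a x : algC) : Prop :=
  exists p : {poly int}, x = (map_poly (intr : int -> algC) p).[a].

Definition inInvPart (a x : algC) : Prop :=
  exists p : {poly int}, x = a^-1 * (map_poly (intr : int -> algC) p).[a^-1].

Definition inLambda (a x : algC) : Prop := inZpoly a x /\ inInvPart a x.

From HB Require Import structures.
From mathcomp Require Import all_boot all_order all_algebra all_field.
From mathcomp Require Import ring zify.
Set Implicit Arguments. Unset Strict Implicit. Unset Printing Implicit Defensive.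
Import Order.TTheory GRing.Theory Num.Theory.
Local Open Scope ring_scope.

(* Write x in Lambda_alpha as x = p(alpha) = alpha^-1 q(alpha^-1). Then X^(n+2) p - Q, with Q
   the reversal of q, vanishes at alpha, so by Gauss's lemma it is a multiple P g of the
   primitive polynomial P = a2 X^2 + a1 X + a0; as deg Q < n + 2, the coefficients of g of
   degree n and n + 1 determine p modulo P, which gives Lambda_alpha = a2 Z + (a2 alpha + a1) Z.
   For x = u a2 + v (a2 alpha + a1), x - d = (u a2 + v a1 - d) + v a2 alpha lies in
   alpha Lambda_alpha = a0 Z + a2 alpha Z iff a0 divides u a2 + v a1 - d, because 1 and alpha
   are linearly independent over Q; so d is the residue of u a2 + v a1 modulo |a0|. *)

Lemma size_le2_polyE (R : nzRingType) (r : {poly R}) :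
  (size r <= 2)%N -> r = (r`_0)%:P + (r`_1)%:P * 'X.
Proof.
move=> size_r; apply/polyP => -[|[|i]]; rewrite coefD coefC coefCM coefX //=.
- by rewrite mulr0 addr0.
- by rewrite mulr1 add0r.
- by rewrite mulr0 addr0 nth_default // (leq_trans size_r).
Qed.

Lemma leq_size_mulXn (R : nzRingType) (h : {poly R}) n k :
  (size (h * 'X^n)%R <= n + k)%N -> (size h <= k)%N.
Proof.
have [-> | h_neq0] := eqVneq h 0; first by rewrite size_poly0.
by rewrite size_mulXn // leq_add2l.
Qed.

Lemma exists_unique_residue (N m : int) : m != 0 ->
  exists! d : nat, (d < `|m|)%N /\ (m %| N - d%:Z)%Z.
Proof.
move=> m_neq0; have r_ge0 := modz_ge0 N m_neq0; have r_lt := ltz_mod N m_neq0.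
exists `|(N %% m)%Z|%N; split.
  split; first by lia.
  by rewrite gez0_abs // {1}(divz_eq N m) addrK dvdz_mull.
move=> d [d_lt]; rewrite -eqz_mod_dvd => /eqP ->.
by rewrite -modz_abs modz_small //; apply/andP; split; lia.
Qed.

Definition zeval (R : comNzRingType) (a : R) := horner_morph (fun c : int => mulrC a c%:~R).
HB.instance Definition _ (R : comNzRingType) (a : R) := GRing.RMorphism.on (zeval a).

Lemma zevalC (R : comNzRingType) (a : R) c : zeval a c%:P = c%:~R.
Proof. exact: horner_morphC. Qed.

Lemma zevalX (R : comNzRingType) (a : R) : zeval a 'X = a.
Proof. exact: horner_morphX. Qed.

Section NonrealPoint.
Variables (F : numFieldType) (a : F).

Hypothesis a_nonreal : a \isn't Num.real.

Lemma nonreal_neq0 : a != 0.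
Proof. by apply: contraNneq a_nonreal => ->; rewrite real0. Qed.

Lemma real_lincomb_nonreal_eq0 (c0 c1 : F) : c0 \is Num.real -> c1 \is Num.real ->
  c0 + c1 * a = 0 -> c0 = 0 /\ c1 = 0.
Proof.
move=> c0_real c1_real c_a.
have c1_eq0 : c1 = 0.
  apply/eqP; apply: contraNT a_nonreal => c1_neq0.
  have -> : a = - c0 / c1.
    apply: (mulIf c1_neq0); rewrite mulfVK // mulrC.
    by apply/eqP; rewrite -addr_eq0 addrC c_a.
  by rewrite rpredM ?rpredN ?rpredV.
by split=> //; move: c_a; rewrite c1_eq0 mul0r addr0.
Qed.

Lemma zeval_size_le2_eq0 (r : {poly int}) : (size r <= 2)%N -> zeval a r = 0 -> r = 0.
Proof.
move=> /size_le2_polyE ->; rewrite rmorphD rmorphM /= zevalX !zevalC.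
case/real_lincomb_nonreal_eq0; rewrite ?realz // => /eqP + /eqP.
by rewrite !intr_eq0 => /eqP -> /eqP ->; rewrite mul0r addr0.
Qed.

End NonrealPoint.

Lemma zevalV_clear_denom (F : fieldType) (a : F) (q : {poly int}) m :
  a != 0 -> (size q <= m)%N ->
  exists2 Q : {poly int}, (size Q <= m)%N & a ^+ m * (a^-1 * zeval a^-1 q) = zeval a Q.
Proof.
move=> a_neq0; elim: m q => [|m IH] q size_q.
  move: size_q; rewrite size_poly_leq0 => /eqP ->.
  by exists 0; rewrite ?size_poly0 ?rmorph0 ?mulr0.
have [|Q size_Q eQ] := IH (drop_poly 1 q); first by rewrite size_drop_poly; lia.
exists ((q`_0)%:P * 'X^m + Q).
  apply: leq_trans (size_polyD _ _) _; rewrite geq_max (leq_trans size_Q) // andbT.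
  by rewrite mul_polyC (leq_trans (size_scale_leq _ _)) // size_polyXn.
rewrite -[q in zeval _ q](poly_take_drop 1) [take_poly 1 q]size1_polyC ?size_take_poly //.
rewrite coef_take_poly /= !rmorphD !rmorphM /= !rmorphXn /= !zevalC !zevalX -eQ exprS.
by field.
Qed.

Definition quadpoly (R : nzRingType) (a0 a1 a2 : R) : {poly R} := Poly [:: a0; a1; a2].

Lemma quadpolyE (R : nzRingType) (a0 a1 a2 : R) :
  quadpoly a0 a1 a2 = a0%:P + a1%:P * 'X + a2%:P * 'X^2.
Proof.
rewrite /quadpoly /= !cons_poly_def polyC0 mul0r add0r mulrDl -mulrA -expr2.
by rewrite addrC [_ * 'X^2 + _]addrC addrA.
Qed.

Lemma size_quadpoly (R : nzRingType) (a0 a1 a2 : R) :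
  a2 != 0 -> size (quadpoly a0 a1 a2) = 3%N.
Proof. by move=> a2_neq0; rewrite /quadpoly (PolyK (c := 0)). Qed.

Lemma zprimitive_quadpoly (a0 a1 a2 : int) : 0 < a2 -> gcdz (gcdz a0 a1) a2 = 1 ->
  zprimitive (quadpoly a0 a1 a2) = quadpoly a0 a1 a2.
Proof.
move=> a2_gt0 gcd1; have a2_neq0 : a2 != 0 by rewrite gt_eqF.
have contents1 : zcontents (quadpoly a0 a1 a2) = 1.
  rewrite /zcontents lead_coefE /quadpoly (PolyK (c := 0)) //= gtr0_sgz // mul1r.
  by rewrite !big_ord_recl big_ord0 /=; move: gcd1; rewrite /gcdz /= gcdn0 gcdnA => ->.
by rewrite [RHS]zpolyEprim contents1 scale1r.
Qed.

Lemma zeval_quadpoly (F : comNzRingType) (a : F) (a0 a1 a2 : int) :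
  zeval a (quadpoly a0 a1 a2) = a2%:~R * a ^+ 2 + a1%:~R * a + a0%:~R.
Proof. by rewrite quadpolyE !rmorphD !rmorphM /= !zevalC zevalX; ring. Qed.

Lemma quadpoly_mulXn_reduce (R : comNzRingType) (a0 a1 a2 : R) n (p Q g : {poly R}) :
  (size Q <= n.+2)%N -> 'X^(n.+2) * p - Q = quadpoly a0 a1 a2 * g ->
  exists t0 t1 : R, exists g2 : {poly R},
    p = quadpoly a0 a1 a2 * g2 + ((a2 * t0 + a1 * t1)%:P + (a2 * t1)%:P * 'X).
Proof.
(* The witnesses are the coefficients of P * t in degrees 2 and 3, where t is the part of
   g between 'X^n and 'X^(n.+2). *)
move=> size_Q eg; set P := quadpoly a0 a1 a2.
set g0 := take_poly n g; set t := take_poly 2 (drop_poly n g).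
set g2 := drop_poly 2 (drop_poly n g).
have g_split : g = g0 + (t + g2 * 'X^2) * 'X^n by rewrite /t /g2 !poly_take_drop.
have t_E := size_le2_polyE (size_take_poly 2 (drop_poly n g)); rewrite -/t in t_E.
set t0 := t`_0 in t_E; set t1 := t`_1 in t_E.
set low := Poly [:: a0 * t0; a1 * t0 + a0 * t1].
exists t0, t1, g2; apply/eqP; rewrite -subr_eq0; set h := p - _; apply/eqP.
have h_shift : h * 'X^(n.+2) = Q + P * g0 + low * 'X^n.
  have -> : h * 'X^(n.+2) = ('X^(n.+2) * p - Q) + Q - 'X^(n.+2) * (p - h) by ring.
  rewrite eg g_split t_E /h /low /P quadpolyE /= !cons_poly_def.
  by rewrite !polyCD !polyCM polyC0 !exprS; ring.
apply/eqP; rewrite -size_poly_leq0; apply: (leq_size_mulXn (n := n.+2)).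
have size_P : (size P <= 3)%N := size_Poly _.
have size_g0 : (size g0 <= n)%N := size_take_poly _ _.
have size_low : (size low <= 2)%N := size_Poly _.
rewrite addn0 h_shift; apply: leq_trans (size_polyD _ _) _; rewrite geq_max; apply/andP; split.
  apply: leq_trans (size_polyD _ _) _; rewrite geq_max size_Q /=.
  apply: leq_trans (size_polyMleq _ _) _.
  by rewrite -subn1 leq_subLR (leq_trans (leq_add size_P size_g0)) // addnC.
apply: leq_trans (size_polyMleq _ _) _.
by rewrite size_polyXn -subn1 leq_subLR (leq_trans (leq_add size_low (leqnn n.+1))) // addnC.
Qed.

Definition inLattice (F : numFieldType) (a : F) (a1 a2 : int) (x : F) : Prop :=
  exists u v : int, x = u%:~R * a2%:~R + v%:~R * (a2%:~R * a + a1%:~R).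

Section QuadraticLattice.
Variables (F : numFieldType) (a : F) (a0 a1 a2 : int).
Hypotheses (a_nonreal : a \isn't Num.real) (a2_gt0 : 0 < a2).
Hypothesis root_a : a2%:~R * a ^+ 2 + a1%:~R * a + a0%:~R = 0.

Let a_neq0 : a != 0 := nonreal_neq0 a_nonreal.

Lemma quad_coef0E : a0%:~R = - (a2%:~R * a ^+ 2 + a1%:~R * a).
Proof. by apply/eqP; rewrite -addr_eq0 addrC root_a. Qed.

Lemma quad_coef0_neq0 : a0 != 0.
Proof.
apply/eqP => a0_eq0; have := root_a; rewrite a0_eq0 addr0 expr2 mulrA -mulrDl.
move/eqP; rewrite mulf_eq0 (negPf a_neq0) orbF addrC => /eqP.
by case/real_lincomb_nonreal_eq0; rewrite ?realz // => _ /eqP; rewrite intr_eq0 gt_eqF.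
Qed.

Lemma inLattice_divE (u v d : int) :
  inLattice a a1 a2 ((u%:~R * a2%:~R + v%:~R * (a2%:~R * a + a1%:~R) - d%:~R) / a)
  <-> (a0 %| u * a2 + v * a1 - d)%Z.
Proof.
set x := _ + _ * _; split=> [[u' [v' e]] | /dvdzP[k e]].
  have div_a : x - d%:~R - a * (u'%:~R * a2%:~R + v'%:~R * (a2%:~R * a + a1%:~R)) = 0.
    by rewrite -e mulrC divfK // subrr.
  have : ((u * a2 + v * a1 - d + v' * a0)%:~R : F) + ((v - u') * a2)%:~R * a = 0.
    rewrite -[RHS]div_a !(rmorphD, rmorphN, rmorphM) /= quad_coef0E /x; ring.
  case/real_lincomb_nonreal_eq0; rewrite ?realz // => /eqP; rewrite intr_eq0 => /eqP N_eq _.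
  by apply/dvdzP; exists (- v'); apply/eqP; rewrite mulNr -addr_eq0 N_eq.
have -> : d = u * a2 + v * a1 - k * a0 by rewrite -e; ring.
exists v, (- k); apply: (mulIf a_neq0); rewrite divfK //.
by rewrite !(rmorphD, rmorphN, rmorphM) /= quad_coef0E /x; ring.
Qed.

Hypothesis gcd_coef1 : gcdz (gcdz a0 a1) a2 = 1.

Lemma quadpoly_dvd_root (R : {poly int}) :
  zeval a R = 0 -> exists g, R = quadpoly a0 a1 a2 * g.
Proof.
move=> R_a; have size_P : size (quadpoly a0 a1 a2) = 3%N by rewrite size_quadpoly ?gt_eqF.
suff /dvdpP_int[g ->] : quadpoly a0 a1 a2 %| R by exists g; rewrite zprimitive_quadpoly.
apply/eqP/(zeval_size_le2_eq0 a_nonreal).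
  by rewrite -ltnS -size_P ltn_modpN0 // -size_poly_eq0 size_P.
have /(congr1 (zeval a)) := Pdiv.Idomain.divp_eq R (quadpoly a0 a1 a2).
by rewrite -mul_polyC !rmorphD !rmorphM /= R_a zeval_quadpoly root_a !mulr0 add0r.
Qed.

Lemma inLattice_two_expansions (p q : {poly int}) :
  zeval a p = a^-1 * zeval a^-1 q -> inLattice a a1 a2 (zeval a p).
Proof.
move=> p_q; set n := size q.
have [Q size_Q Q_a] := zevalV_clear_denom (q := q) (m := n.+2) a_neq0 (leqW (leqnSn n)).
have [g eg] : exists g, 'X^(n.+2) * p - Q = quadpoly a0 a1 a2 * g.
  by apply: quadpoly_dvd_root; rewrite rmorphB rmorphM rmorphXn /= zevalX p_q Q_a subrr.
have [t0 [t1 [g2 ->]]] := quadpoly_mulXn_reduce size_Q eg.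
exists t0, t1; rewrite !(rmorphD, rmorphM) /= zeval_quadpoly root_a mul0r add0r.
by rewrite !zevalC zevalX; ring.
Qed.

End QuadraticLattice.

Lemma inLambdaE (a : algC) (a0 a1 a2 : int) (x : algC) :
  a \isn't Num.real -> 0 < a2 -> gcdz (gcdz a0 a1) a2 = 1 ->
  a2%:~R * a ^+ 2 + a1%:~R * a + a0%:~R = 0 ->
  inLambda a x <-> inLattice a a1 a2 x.
Proof.
move=> a_nonreal a2_gt0 gcd1 root_a; have a_neq0 := nonreal_neq0 a_nonreal.
split=> [[[p ->] [q p_q]] | [u [v ->]]].
  exact: (inLattice_two_expansions a_nonreal a2_gt0 root_a gcd1 (q := q) p_q).
split.
  exists ((u * a2 + v * a1)%:P + (v * a2)%:P * 'X); rewrite -[RHS]/(zeval a _).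
  by rewrite !(rmorphD, rmorphM) /= !zevalC zevalX; ring.
exists ((- (u * a1) - v * a0)%:P + (- (u * a0))%:P * 'X).
rewrite -[X in _ = _ * X]/(zeval a^-1 _) !(rmorphD, rmorphM) /= !zevalC zevalX.
by rewrite !(rmorphD, rmorphN, rmorphM) /= (quad_coef0E root_a); field.
Qed.

Theorem mainTheorem3 (alpha : algC) (r s : rat) (a0 a1 a2 : int) :
  alpha = ratr r + ratr s * 'i ->
  alpha \isn't Num.real ->
  1 < `|alpha| ->
  gcdz (gcdz a0 a1) a2 = 1 ->
  0 < a2 ->
  a2%:~R * alpha ^+ 2 + a1%:~R * alpha + a0%:~R = 0 ->
  forall x : algC, inLambda alpha x ->
    exists! d : nat, (d < `|a0|)%N /\ inLambda alpha ((x - d%:R) / alpha).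
Proof.
move=> _ a_nonreal _ gcd1 a2_gt0 root_a x.
have LambdaE := inLambdaE _ a_nonreal a2_gt0 gcd1 root_a.
case/LambdaE => [u [v ->]]; set y := _ + _ * _.
have [d [[lt_d dvd_d] uniq_d]] :=
  exists_unique_residue (u * a2 + v * a1) (quad_coef0_neq0 a_nonreal a2_gt0 root_a).
have divE (e : nat) :
    inLambda alpha ((y - e%:R) / alpha) <-> (a0 %| u * a2 + v * a1 - e%:Z)%Z.
  exact: iff_trans (LambdaE _) (inLattice_divE a_nonreal root_a u v e).
exists d; split=> [|e [lt_e /divE dvd_e]]; first by split=> //; apply/divE.
exact: uniq_d.
Qed.
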